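(* Let $\Gamma$ be an orthosymmetric, convex, compact set and $0<p<1$. If there is a constant $C>0$ with $D(\Gamma,\epsilon)\le C\epsilon^{-p}$ for all $\epsilon\in(0,1]$, then there is a constant $C'>0$ with $D_{\mathsf c}(\Gamma,\epsilon)\le C'\epsilon^{-p/(1-p)}$ for all $\epsilon\in(0,1]$.
   Context: Orthosymmetric: closed under flipping signs of any coordinates. Kolmogorov dimension $D(\Gamma,\epsilon)$: the smallest integer $d$ such that $\inf_{\Pi_d}\sup_{\boldsymbol\theta\in\Gamma}\|\boldsymbol\theta-\Pi_d\boldsymbol\theta\|_2\le\epsilon$ over $d$-dimensional orthogonal projections. Coordinate-wise Kolmogorov dimension $D_{\mathsf c}(\Gamma,\epsilon)$: the smallest integer $d$ such that some set $A$ of $d$ coordinates satisfies $\sup_{\boldsymbol\theta\in\Gamma}\sum_{i\notin A}\theta_i^2\le\epsilon^2$. *)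

From Stdlib Require Import Reals List Arith.
From Coquelicot Require Import Coquelicot.
Open Scope R_scope.

Definition seqR := nat -> R.

Definition l2 (x : seqR) : Prop := ex_series (fun i => x i ^ 2).
Definition l2norm (x : seqR) : R := sqrt (Series (fun i => x i ^ 2)).
Definition l2inner (x y : seqR) : R := Series (fun i => x i * y i).

Definition l2open (U : seqR -> Prop) : Prop :=
  forall x, l2 x -> U x ->
    exists r, 0 < r /\
      forall y, l2 y -> l2norm (fun i => y i - x i) < r -> U y.

Definition l2compact (G : seqR -> Prop) : Prop :=
  (forall x, G x -> l2 x) /\
  forall (I : Type) (U : I -> seqR -> Prop),
    (forall j, l2open (U j)) ->
    (forall x, G x -> exists j, U j x) ->
    exists l : list I, forall x, G x -> exists j, In j l /\ U j x.

Definition convex (G : seqR -> Prop) : Prop :=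
  forall x y t, G x -> G y -> 0 <= t <= 1 ->
    G (fun i => t * x i + (1 - t) * y i).

Definition orthosymmetric (G : seqR -> Prop) : Prop :=
  forall x (s : nat -> bool), G x -> G (fun i => if s i then - x i else x i).

Definition orthonormal (d : nat) (u : nat -> seqR) : Prop :=
  (forall k, (k < d)%nat -> l2 (u k)) /\
  (forall j k, (j < d)%nat -> (k < d)%nat ->
     l2inner (u j) (u k) = if Nat.eqb j k then 1 else 0).

Definition proj (d : nat) (u : nat -> seqR) (x : seqR) : seqR :=
  fun i => fold_right Rplus 0 (map (fun k => l2inner x (u k) * u k i) (seq 0 d)).

(* inf over d-dim orthogonal projections of sup_{x in G} ||x - Pi x|| <= eps *)
Definition kolm_ok (G : seqR -> Prop) (eps : R) (d : nat) : Prop :=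
  forall delta, 0 < delta ->
    exists u, orthonormal d u /\
      forall x, G x -> l2norm (fun i => x i - proj d u x i) <= eps + delta.

Definition is_kolm_dim (G : seqR -> Prop) (eps : R) (d : nat) : Prop :=
  kolm_ok G eps d /\ forall d', kolm_ok G eps d' -> (d <= d')%nat.

Definition inb (A : list nat) (i : nat) : bool := existsb (Nat.eqb i) A.

Definition coord_ok (G : seqR -> Prop) (eps : R) (d : nat) : Prop :=
  exists A : list nat, NoDup A /\ length A = d /\
    forall x, G x -> Series (fun i => if inb A i then 0 else x i ^ 2) <= eps ^ 2.

Definition is_coord_kolm_dim (G : seqR -> Prop) (eps : R) (d : nat) : Prop :=
  coord_ok G eps d /\ forall d', coord_ok G eps d' -> (d <= d')%nat.

From Stdlib Require Import Reals List Arith Lra Lia Wf_nat.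
From Stdlib Require Import Classical ClassicalEpsilon FunctionalExtensionality.
From Coquelicot Require Import Coquelicot.
Open Scope R_scope.

(* Let A be the set of coordinates on which some point of G exceeds eta in
   absolute value.  By orthosymmetry and convexity G contains [th_i e_i] for
   every [th] in G, so a d-dimensional subspace approximating G within
   [3 eta / 4] puts weight more than 1/5 on each [e_i] with [i] in A; the
   weights add up to d, hence [|A| <= 5 D(G, eta/2)].  Off A every point of G
   is flat ([|th_i| <= eta]); flipping signs so that the coefficients on an
   approximating subspace are as small as on average, a flat point has squared
   norm at most [4 e^2 + 2 eta^2 D(G, e)].  Taking [e = eps/4] and
   [eta ~ eps^(1/(1-p))] makes this at most [eps^2], and then
   [D_c(G, eps) <= 5 D(G, eta/2) = O(eps^(-p/(1-p)))]. *)

(* Unlike [sum_n f N], which has [N + 1] terms, [rsum n f] sums [f i] for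
   [i < n], so that empty ranges (e.g. a 0-dimensional projection) are allowed. *)
Fixpoint rsum (n : nat) (f : nat -> R) : R :=
  match n with O => 0 | S m => rsum m f + f m end.

Lemma rsum_ext n f g : (forall i, (i < n)%nat -> f i = g i) -> rsum n f = rsum n g.
Proof. induction n; simpl; intros H; auto. rewrite IHn, H; auto; intros; apply H; lia. Qed.

Lemma rsum_plus n f g : rsum n (fun i => f i + g i) = rsum n f + rsum n g.
Proof. induction n; simpl; [|rewrite IHn]; lra. Qed.

Lemma rsum_scal n c f : rsum n (fun i => c * f i) = c * rsum n f.
Proof. induction n; simpl; [|rewrite IHn]; lra. Qed.

Lemma rsum_le n f g : (forall i, (i < n)%nat -> f i <= g i) -> rsum n f <= rsum n g.
Proof.
  induction n; simpl; intros H; [lra|].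
  assert (rsum n f <= rsum n g) by (apply IHn; intros; apply H; lia).
  specialize (H n (Nat.lt_succ_diag_r n)). lra.
Qed.

Lemma rsum_const n c : rsum n (fun _ => c) = INR n * c.
Proof. induction n; simpl rsum; [simpl|rewrite IHn, S_INR]; lra. Qed.

Lemma rsum_swap n m (f : nat -> nat -> R) :
  rsum n (fun i => rsum m (f i)) = rsum m (fun k => rsum n (fun i => f i k)).
Proof.
  induction n; simpl.
  - rewrite (rsum_const m 0). lra.
  - rewrite IHn, <- rsum_plus. reflexivity.
Qed.

Lemma fold_right_Rplus_rsum n f : fold_right Rplus 0 (map f (seq 0 n)) = rsum n f.
Proof.
  assert (Hacc : forall l c, fold_right Rplus c l = fold_right Rplus 0 l + c).
  { induction l; simpl; intros; [|rewrite IHl]; lra. }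
  induction n; simpl rsum; auto.
  rewrite seq_S, map_app, fold_right_app. simpl. rewrite Hacc, IHn. lra.
Qed.

Lemma sum_n_rsum f N : sum_n f N = rsum (S N) f.
Proof.
  induction N.
  - rewrite sum_O. simpl. lra.
  - rewrite sum_Sn, IHN. reflexivity.
Qed.

Lemma is_series_finite_support f N : (forall i, (N <= i)%nat -> f i = 0) ->
  is_series f (rsum N f).
Proof.
  intros Hf. apply (is_lim_seq_ext_loc (fun _ => rsum N f) (sum_n f) (rsum N f));
    [|apply is_lim_seq_const].
  assert (Hstable : forall k, rsum (N + k) f = rsum N f).
  { induction k; rewrite ?Nat.add_0_r, ?Nat.add_succ_r; simpl; auto.
    rewrite IHk, Hf by lia. lra. }
  exists N. intros n Hn. rewrite sum_n_rsum.
  replace (S n) with (N + (S n - N))%nat by lia. auto.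
Qed.

Lemma rsum_le_Series f N : (forall i, 0 <= f i) -> ex_series f -> rsum N f <= Series f.
Proof.
  intros Hf Hs.
  assert (Hcv : Un_cv (fun n => sum_f_R0 f n) (Series f)).
  { apply is_series_Reals, Series_correct, Hs. }
  destruct N as [|N].
  - apply Rle_trans with (sum_f_R0 f 0); [simpl; apply Hf|apply sum_incr; auto].
  - rewrite <- sum_n_rsum, sum_n_Reals. apply sum_incr; auto.
Qed.

Lemma Series_le_of_rsum_le f M : ex_series f -> (forall N, rsum N f <= M) -> Series f <= M.
Proof.
  intros Hs HM.
  assert (Hle : Rbar_le (Series f) M).
  { apply (is_lim_seq_le (sum_n f) (fun _ => M));
      [|apply Series_correct, Hs|apply is_lim_seq_const].
    intros n. rewrite sum_n_rsum. apply HM. }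
  exact Hle.
Qed.

Lemma ex_series_nonneg_le a b : (forall n, 0 <= a n <= b n) -> ex_series b -> ex_series a.
Proof.
  intros Hab. apply (ex_series_le (V := R_CompleteNormedModule)). intros n.
  change (Rabs (a n) <= b n). rewrite Rabs_pos_eq; apply Hab.
Qed.

Lemma l2_plus x y : l2 x -> l2 y -> l2 (fun i => x i + y i).
Proof.
  intros Hx Hy. apply (ex_series_nonneg_le _ (fun i => 2 * x i ^ 2 + 2 * y i ^ 2)).
  - intros n. split; [apply pow2_ge_0|]. pose proof (pow2_ge_0 (x n - y n)). nra.
  - apply (ex_series_plus (V := R_NormedModule));
      apply (ex_series_scal (V := R_NormedModule)); auto.
Qed.

Lemma l2_scal c x : l2 x -> l2 (fun i => c * x i).
Proof.
  intros Hx. apply (ex_series_nonneg_le _ (fun i => c ^ 2 * x i ^ 2)).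
  - intros n. split; [apply pow2_ge_0|]. lra.
  - apply (ex_series_scal (V := R_NormedModule)), Hx.
Qed.

Lemma l2_rsum d (c : nat -> R) (u : nat -> seqR) : (forall k, (k < d)%nat -> l2 (u k)) ->
  l2 (fun i => rsum d (fun k => c k * u k i)).
Proof.
  induction d; intros Hu; simpl.
  - eexists. apply (is_series_finite_support _ 0). intros; simpl; lra.
  - apply l2_plus; [apply IHd; auto|apply l2_scal; auto].
Qed.

Lemma l2norm_sq x : l2 x -> l2norm x ^ 2 = Series (fun i => x i ^ 2).
Proof.
  intros Hx. unfold l2norm. rewrite pow2_sqrt; auto.
  apply (rsum_le_Series _ 0); auto. intros; apply pow2_ge_0.
Qed.

Lemma rsum_sq_le_l2norm x N : l2 x -> rsum N (fun i => x i ^ 2) <= l2norm x ^ 2.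
Proof. intros Hx. rewrite l2norm_sq; auto. apply rsum_le_Series; auto. intros; apply pow2_ge_0. Qed.

Lemma l2inner_finite_support x y N : (forall i, (N <= i)%nat -> x i = 0) ->
  l2inner x y = rsum N (fun i => x i * y i).
Proof.
  intros Hx. apply is_series_unique, is_series_finite_support.
  intros i Hi. rewrite Hx; auto; lra.
Qed.

Lemma orthonormal_rsum_sq_le_1 d u k N : orthonormal d u -> (k < d)%nat ->
  rsum N (fun i => u k i ^ 2) <= 1.
Proof.
  intros [Hl Hu] Hk. specialize (Hu k k Hk Hk). rewrite Nat.eqb_refl in Hu.
  rewrite <- Hu. unfold l2inner. rewrite (Series_ext _ (fun i => u k i ^ 2)) by (intros; ring).
  apply rsum_le_Series; [intros; apply pow2_ge_0|apply Hl, Hk].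
Qed.

(* Pythagoras would give the factor 1 instead of 2, but on finitely many
   coordinates the bound [2 r x <= r^2 + x^2] suffices and needs neither
   orthonormality nor rearranging series. *)
Lemma rsum_sq_le_residual d u x N :
  (forall k, (k < d)%nat -> l2 (u k)) -> (forall i, (N <= i)%nat -> x i = 0) ->
  rsum N (fun i => x i ^ 2) <=
    l2norm (fun i => x i - proj d u x i) ^ 2 + 2 * rsum d (fun k => l2inner x (u k) ^ 2).
Proof.
  intros Hu Hx.
  set (c k := l2inner x (u k)).
  set (r := fun i => x i - proj d u x i).
  assert (Hr : forall i, r i = x i + -1 * rsum d (fun k => c k * u k i)).
  { intros i. unfold r, proj, c. rewrite fold_right_Rplus_rsum. lra. }
  assert (Hrl2 : l2 r).
  { replace r with (fun i => x i + -1 * rsum d (fun k => c k * u k i))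
      by (apply functional_extensionality; intros; rewrite Hr; reflexivity).
    apply l2_plus; [|apply l2_scal, l2_rsum, Hu].
    eexists. apply (is_series_finite_support _ N). intros i Hi. rewrite Hx; auto; simpl; lra. }
  assert (Hrx : rsum N (fun i => r i * x i) =
                rsum N (fun i => x i ^ 2) - rsum d (fun k => c k ^ 2)).
  { rewrite (rsum_ext N _ (fun i => x i ^ 2 + -1 * rsum d (fun k => c k * (x i * u k i)))).
    2:{ intros i _. rewrite Hr.
        transitivity (x i ^ 2 + -1 * (x i * rsum d (fun k => c k * u k i))); [ring|].
        rewrite <- rsum_scal. do 3 f_equal. apply functional_extensionality. intros; ring. }
    rewrite rsum_plus, rsum_scal, rsum_swap.
    rewrite (rsum_ext d _ (fun k => c k ^ 2)); [lra|].
    intros k _. rewrite rsum_scal. unfold c. rewrite (l2inner_finite_support _ _ N Hx).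
    simpl. ring. }
  assert (Hamgm : rsum N (fun i => r i * x i) <= / 2 * rsum N (fun i => r i ^ 2 + x i ^ 2)).
  { rewrite <- rsum_scal. apply rsum_le. intros i _. pose proof (pow2_ge_0 (r i - x i)). nra. }
  rewrite rsum_plus in Hamgm.
  pose proof (rsum_sq_le_l2norm r N Hrl2).
  fold r. change (rsum d (fun k => l2inner x (u k) ^ 2)) with (rsum d (fun k => c k ^ 2)).
  lra.
Qed.

Definition sgnb (b : bool) : R := if b then -1 else 1.

(* Choosing the signs one coordinate at a time so that the new cross term is
   never positive. *)
Lemma exists_signs_rsum_sq_le d N (a : nat -> nat -> R) : exists s : nat -> bool,
  rsum d (fun k => rsum N (fun i => sgnb (s i) * a k i) ^ 2) <=
  rsum d (fun k => rsum N (fun i => a k i ^ 2)).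
Proof.
  induction N as [|N [s Hs]].
  - exists (fun _ => false). apply rsum_le. intros; simpl; lra.
  - set (partial k := rsum N (fun i => sgnb (s i) * a k i)).
    set (cross := rsum d (fun k => partial k * a k N)).
    assert (Ht : exists t, sgnb t * cross <= 0)
      by (destruct (Rle_dec 0 cross); [exists true|exists false]; simpl; lra).
    destruct Ht as [t Ht].
    exists (fun i => if Nat.eqb i N then t else s i).
    rewrite (rsum_ext d _
      (fun k => partial k ^ 2 + a k N ^ 2 + 2 * sgnb t * (partial k * a k N))).
    2:{ intros k _. cbn [rsum]. rewrite Nat.eqb_refl.
        rewrite (rsum_ext N _ (fun i => sgnb (s i) * a k i)).
        - fold (partial k). destruct t; simpl; ring.
        - intros i Hi. destruct (Nat.eqb_spec i N); [lia|reflexivity]. }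
    rewrite !rsum_plus, rsum_scal. cbn [rsum]. rewrite rsum_plus.
    fold cross.
    change (rsum d (fun k => partial k ^ 2) <= rsum d (fun k => rsum N (fun i => a k i ^ 2)))
      in Hs.
    lra.
Qed.

Lemma restrict_mem G (c : nat -> bool) x : orthosymmetric G -> convex G -> G x ->
  G (fun i => if c i then x i else 0).
Proof.
  intros Hos Hcv Hx.
  assert (Hmid : G (fun i => / 2 * x i + (1 - / 2) * (if negb (c i) then - x i else x i)))
    by (apply Hcv; [auto|apply Hos; auto|lra]).
  replace (fun i => if c i then x i else 0)
    with (fun i => / 2 * x i + (1 - / 2) * (if negb (c i) then - x i else x i)); auto.
  apply functional_extensionality. intros i. destruct (c i); simpl; field.
Qed.

Lemma flat_rsum_sq_le G e d eta N z : orthosymmetric G -> kolm_ok G e d -> 0 < e -> G z ->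
  (forall i, (N <= i)%nat -> z i = 0) -> (forall i, Rabs (z i) <= eta) ->
  rsum N (fun i => z i ^ 2) <= 4 * e ^ 2 + 2 * eta ^ 2 * INR d.
Proof.
  intros Hos Hk He Hz HzN Heta.
  destruct (Hk e He) as [u [Hon Happrox]].
  destruct (exists_signs_rsum_sq_le d N (fun k i => z i * u k i)) as [s Hs].
  set (w := fun i => if s i then - z i else z i).
  assert (Hw : forall i, w i = sgnb (s i) * z i)
    by (intros i; unfold w, sgnb; destruct (s i); ring).
  assert (HwN : forall i, (N <= i)%nat -> w i = 0) by (intros i Hi; rewrite Hw, HzN; auto; ring).
  assert (Hres := rsum_sq_le_residual d u w N (fun k Hk => proj1 Hon k Hk) HwN).
  assert (Hnorm : l2norm (fun i => w i - proj d u w i) ^ 2 <= 4 * e ^ 2).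
  { specialize (Happrox w (Hos z s Hz)).
    pose proof (sqrt_pos (Series (fun i => (w i - proj d u w i) ^ 2))).
    replace (4 * e ^ 2) with ((e + e) ^ 2) by ring. apply pow_incr. split; auto. }
  assert (Hcoef : rsum d (fun k => l2inner w (u k) ^ 2) <= eta ^ 2 * INR d).
  { rewrite (rsum_ext d _ (fun k => rsum N (fun i => sgnb (s i) * (z i * u k i)) ^ 2)).
    2:{ intros k _. rewrite (l2inner_finite_support _ _ N HwN). f_equal.
        apply rsum_ext. intros i _. rewrite Hw. ring. }
    eapply Rle_trans; [exact Hs|].
    rewrite Rmult_comm, <- rsum_const. apply rsum_le. intros k Hkd.
    apply Rle_trans with (eta ^ 2 * rsum N (fun i => u k i ^ 2)).
    - rewrite <- rsum_scal. apply rsum_le. intros i _. rewrite Rpow_mult_distr.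
      apply Rmult_le_compat_r; [apply pow2_ge_0|].
      rewrite <- (pow2_abs (z i)). apply pow_incr. split; [apply Rabs_pos|auto].
    - pose proof (orthonormal_rsum_sq_le_1 d u k N Hon Hkd). pose proof (pow2_ge_0 eta). nra. }
  rewrite (rsum_ext N _ (fun i => w i ^ 2)) by (intros; rewrite Hw; destruct (s i); simpl; ring).
  lra.
Qed.

Lemma large_coord_weight G d u eta th i : orthosymmetric G -> convex G -> orthonormal d u ->
  (forall x, G x -> l2norm (fun j => x j - proj d u x j) <= 3 * eta / 4) ->
  0 < eta -> G th -> eta < Rabs (th i) -> 1 <= 5 * rsum d (fun k => u k i ^ 2).
Proof.
  intros Hos Hcv Hon Happrox Heta Hth Hi.
  set (y := fun j => if Nat.eqb j i then th j else 0).
  assert (Hy : G y) by (apply restrict_mem; auto).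
  assert (HyN : forall j, (S i <= j)%nat -> y j = 0).
  { intros j Hj. unfold y. destruct (Nat.eqb_spec j i); [lia|reflexivity]. }
  assert (Hpoint : forall f, rsum (S i) (fun j => y j * f j) = th i * f i).
  { intros f. cbn [rsum]. unfold y at 2. rewrite Nat.eqb_refl.
    rewrite (rsum_ext i _ (fun _ => 0 * 0)), rsum_const; [ring|].
    intros j Hj. unfold y. destruct (Nat.eqb_spec j i); [lia|ring]. }
  assert (Hres := rsum_sq_le_residual d u y (S i) (fun k Hk => proj1 Hon k Hk) HyN).
  rewrite (rsum_ext _ _ (fun j => y j * y j)), Hpoint in Hres by (intros; ring).
  rewrite (rsum_ext d _ (fun k => th i ^ 2 * u k i ^ 2)), rsum_scal in Hres.
  2:{ intros k _. rewrite (l2inner_finite_support _ _ (S i) HyN), Hpoint. ring. }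
  replace (y i) with (th i) in Hres by (unfold y; rewrite Nat.eqb_refl; reflexivity).
  assert (Hnorm : l2norm (fun j => y j - proj d u y j) ^ 2 <= (3 * eta / 4) ^ 2).
  { pose proof (sqrt_pos (Series (fun j => (y j - proj d u y j) ^ 2))).
    apply pow_incr. split; auto. }
  assert (Hbig : eta ^ 2 < th i ^ 2).
  { rewrite <- (pow2_abs (th i)). simpl. nra. }
  set (P := rsum d (fun k => u k i ^ 2)) in *.
  (* [th_i^2 <= (3 eta / 4)^2 + 2 P th_i^2] with [eta < |th_i|] forces [P > 7/32]. *)
  assert (th i ^ 2 * (1 - 2 * P) < 9 / 16 * th i ^ 2) by nra.
  nra.
Qed.

Lemma rsum_large_coords_le G d eta N (large : nat -> bool) : orthosymmetric G -> convex G ->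
  kolm_ok G (eta / 2) d -> 0 < eta ->
  (forall i, large i = true -> exists th, G th /\ eta < Rabs (th i)) ->
  rsum N (fun i => if large i then 1 else 0) <= 5 * INR d.
Proof.
  intros Hos Hcv Hk Heta Hlarge.
  destruct (Hk (eta / 4)) as [u [Hon Happrox]]; [lra|].
  apply Rle_trans with (5 * rsum N (fun i => rsum d (fun k => u k i ^ 2))).
  - rewrite <- rsum_scal. apply rsum_le. intros i _.
    destruct (large i) eqn:Hi.
    + destruct (Hlarge i Hi) as [th [Hth Hthi]].
      apply (large_coord_weight G d u eta th i); auto.
      intros x Hx. specialize (Happrox x Hx). lra.
    + pose proof (rsum_le d (fun _ => 0) (fun k => u k i ^ 2) (fun k _ => pow2_ge_0 _)) as Hw.
      rewrite rsum_const in Hw. lra.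
  - rewrite rsum_swap. apply Rmult_le_compat_l; [lra|].
    rewrite <- (Rmult_1_r (INR d)), <- rsum_const. apply rsum_le. intros k Hkd.
    apply (orthonormal_rsum_sq_le_1 d); auto.
Qed.

Definition count_below (P : nat -> bool) (N : nat) : nat := length (filter P (seq 0 N)).

Lemma count_below_S P N : count_below P (S N) = (count_below P N + if P N then 1 else 0)%nat.
Proof.
  unfold count_below. rewrite seq_S, filter_app, length_app. simpl.
  destruct (P N); simpl; lia.
Qed.

Lemma INR_count_below P N : INR (count_below P N) = rsum N (fun i => if P i then 1 else 0).
Proof.
  induction N; [reflexivity|].
  rewrite count_below_S, plus_INR, IHN. cbn [rsum]. destruct (P N); simpl; lra.
Qed.

Lemma count_below_mono P M N : (M <= N)%nat -> (count_below P M <= count_below P N)%nat.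
Proof. induction 1; [lia|]. rewrite count_below_S. lia. Qed.

Lemma bounded_nat_fun_has_max (f : nat -> nat) B : (forall n, (f n <= B)%nat) ->
  exists m, forall n, (f n <= f m)%nat.
Proof.
  intros Hf.
  destruct (dec_inh_nat_subset_has_unique_least_element (fun k => exists m, (f m + k = B)%nat))
    as [k [[[m Hm] Hmin] _]].
  - intros k. apply classic.
  - exists (B - f 0)%nat, 0%nat. specialize (Hf 0%nat). lia.
  - exists m. intros n.
    assert (Hn : (k <= B - f n)%nat) by (apply Hmin; exists n; specialize (Hf n); lia).
    specialize (Hf n). lia.
Qed.

Lemma finite_of_count_below_bounded P B : (forall N, (count_below P N <= B)%nat) ->
  exists L, NoDup L /\ (forall i, inb L i = P i) /\ (length L <= B)%nat.
Proof.
  intros HB. destruct (bounded_nat_fun_has_max (count_below P) B HB) as [M HM].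
  assert (HPlt : forall i, P i = true -> (i < M)%nat).
  { intros i Hi. destruct (lt_dec i M) as [|Hge]; auto.
    specialize (HM (S i)). rewrite count_below_S, Hi in HM.
    pose proof (count_below_mono P M i). lia. }
  exists (filter P (seq 0 M)). split; [|split; [|apply HB]].
  - apply NoDup_filter, seq_NoDup.
  - intros i. unfold inb. destruct (P i) eqn:Hi.
    + apply existsb_exists. exists i. rewrite filter_In, in_seq, Nat.eqb_refl.
      specialize (HPlt i Hi). auto with arith.
    + apply Bool.not_true_is_false. rewrite existsb_exists.
      intros [j [Hj Hij]]. apply Nat.eqb_eq in Hij. subst j.
      apply filter_In in Hj. destruct Hj. congruence.
Qed.

Lemma coord_tail_le G eps e d eta (L : list nat) :
  orthosymmetric G -> convex G -> l2compact G -> kolm_ok G e d -> 0 < e -> 0 < eta ->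
  4 * e ^ 2 + 2 * eta ^ 2 * INR d <= eps ^ 2 ->
  (forall i, inb L i = false -> forall th, G th -> Rabs (th i) <= eta) ->
  forall th, G th -> Series (fun i => if inb L i then 0 else th i ^ 2) <= eps ^ 2.
Proof.
  intros Hos Hcv [Hl2 _] Hk He Heta Hbudget Hsmall th Hth.
  apply Series_le_of_rsum_le.
  { apply (ex_series_nonneg_le _ (fun i => th i ^ 2)); [|apply Hl2, Hth].
    intros n. destruct (inb L n); split; try lra; apply pow2_ge_0. }
  intros N.
  set (z := fun i => if (Nat.ltb i N && negb (inb L i))%bool then th i else 0).
  assert (Hz : G z) by (apply restrict_mem; auto).
  assert (HzN : forall i, (N <= i)%nat -> z i = 0).
  { intros i Hi. unfold z. destruct (Nat.ltb_spec i N); [lia|reflexivity]. }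
  assert (Hzeta : forall i, Rabs (z i) <= eta).
  { intros i. unfold z. destruct (Nat.ltb i N), (inb L i) eqn:HL; simpl;
      rewrite ?Rabs_R0; auto; lra. }
  rewrite (rsum_ext N _ (fun i => z i ^ 2)).
  - pose proof (flat_rsum_sq_le G e d eta N z Hos Hk He Hz HzN Hzeta). lra.
  - intros i Hi. unfold z. destruct (Nat.ltb_spec i N); [|lia].
    destruct (inb L i); simpl; ring.
Qed.

Lemma coord_ok_of_kolm_ok G eps e eta d1 d2 :
  orthosymmetric G -> convex G -> l2compact G -> 0 < e -> 0 < eta ->
  kolm_ok G e d1 -> kolm_ok G (eta / 2) d2 ->
  4 * e ^ 2 + 2 * eta ^ 2 * INR d1 <= eps ^ 2 ->
  exists n, coord_ok G eps n /\ (n <= 5 * d2)%nat.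
Proof.
  intros Hos Hcv Hcp He Heta Hk1 Hk2 Hbudget.
  set (large i := if excluded_middle_informative (exists th, G th /\ eta < Rabs (th i))
                  then true else false).
  assert (Hlarge : forall i, large i = true -> exists th, G th /\ eta < Rabs (th i)).
  { intros i. unfold large. destruct (excluded_middle_informative _); easy. }
  assert (Hsmall : forall i, large i = false -> forall th, G th -> Rabs (th i) <= eta).
  { intros i. unfold large. destruct (excluded_middle_informative _) as [|Hno]; [easy|].
    intros _ th Hth. apply Rnot_lt_le. intros Hi. apply Hno. eauto. }
  assert (Hcount : forall N, (count_below large N <= 5 * d2)%nat).
  { intros N. apply INR_le. rewrite mult_INR, INR_count_below.
    replace (INR 5) with 5 by (simpl; ring).
    apply (rsum_large_coords_le G d2 eta); auto. }
  destruct (finite_of_count_below_bounded large _ Hcount) as [L [HL [HLlarge HLlen]]].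
  exists (length L). split; auto.
  exists L. split; [auto|split; [reflexivity|]].
  apply (coord_tail_le G eps e d1 eta L); auto.
  intros i Hi. apply Hsmall. rewrite <- HLlarge. exact Hi.
Qed.

Lemma coord_kolm_dim_le G eps n : coord_ok G eps n ->
  exists d, is_coord_kolm_dim G eps d /\ (d <= n)%nat.
Proof.
  intros Hn.
  destruct (dec_inh_nat_subset_has_unique_least_element (coord_ok G eps)) as [d [[Hd Hmin] _]].
  - intros m. apply classic.
  - exists n. exact Hn.
  - exists d. split; [split|]; auto.
Qed.

Lemma Rpower_le_of_le_1 x a b : 0 < x <= 1 -> a <= b -> Rpower x b <= Rpower x a.
Proof.
  intros Hx Hab. unfold Rpower.
  assert (Hln : ln x <= 0) by (rewrite <- ln_1; apply ln_le; lra).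
  destruct (Req_dec (b * ln x) (a * ln x)) as [E|E]; [rewrite E; lra|].
  left. apply exp_increasing. nra.
Qed.

Lemma Rpower_mul_Rpower K x a b : 0 < K -> 0 < x ->
  Rpower (K * Rpower x a) b = Rpower K b * Rpower x (a * b).
Proof.
  intros HK Hx. rewrite <- Rpower_mult_distr, Rpower_mult; auto.
  apply exp_pos.
Qed.

(* Where the exponent p/(1-p) comes from: with [eta = K eps^(1/(1-p))] the
   budget [eta^2 D(eps/4)] is of order [eps^(2/(1-p) - p) <= eps^2]. *)
Lemma tail_budget p C eps d : 0 < p < 1 -> 1 <= C -> 0 < eps <= 1 ->
  INR d <= C * Rpower (eps / 4) (- p) ->
  4 * (eps / 4) ^ 2 + 2 * (/ (4 * C) * Rpower eps (/ (1 - p))) ^ 2 * INR d <= eps ^ 2.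
Proof.
  intros Hp HC Heps Hd.
  set (a := / (1 - p)).
  assert (Ha : 1 + p <= a).
  { assert (a * (1 - p) = 1) by (unfold a; field; lra). nra. }
  assert (H4 : Rpower (eps / 4) (- p) <= 4 * Rpower eps (- p)).
  { unfold Rdiv. rewrite <- Rpower_mult_distr by lra.
    replace (Rpower (/ 4) (- p)) with (Rpower 4 p)
      by (unfold Rpower; rewrite ln_Rinv by lra; f_equal; ring).
    assert (Rpower 4 p <= 4) by (rewrite <- (Rpower_1 4) at 2 by lra; apply Rle_Rpower; lra).
    pose proof (exp_pos (- p * ln eps)). unfold Rpower at 1 3. nra. }
  assert (Hexp : Rpower eps a ^ 2 * Rpower eps (- p) <= eps ^ 2).
  { replace (Rpower eps a ^ 2 * Rpower eps (- p)) with (Rpower eps (a + a + - p))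
      by (rewrite !Rpower_plus; ring).
    rewrite <- Rpower_pow by lra. apply Rpower_le_of_le_1; auto. simpl. lra. }
  assert (Hd' : INR d <= 4 * C * Rpower eps (- p)) by nra.
  assert (HK : (/ (4 * C)) ^ 2 * (4 * C) <= / 4).
  { replace ((/ (4 * C)) ^ 2 * (4 * C)) with (/ (4 * C)) by (field; lra).
    apply Rinv_le_contravar; lra. }
  assert (Hprod : (/ (4 * C) * Rpower eps a) ^ 2 * INR d <= / 4 * eps ^ 2).
  { rewrite Rpow_mult_distr.
    apply Rle_trans with ((/ (4 * C)) ^ 2 * (4 * C) * (Rpower eps a ^ 2 * Rpower eps (- p))).
    - replace ((/ (4 * C)) ^ 2 * (4 * C) * (Rpower eps a ^ 2 * Rpower eps (- p)))
        with ((/ (4 * C)) ^ 2 * Rpower eps a ^ 2 * (4 * C * Rpower eps (- p))) by ring.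
      apply Rmult_le_compat_l; [apply Rmult_le_pos; apply pow2_ge_0|exact Hd'].
    - apply Rmult_le_compat; auto; try lra.
      + apply Rmult_le_pos; [apply pow2_ge_0|lra].
      + pose proof (exp_pos (- p * ln eps)). pose proof (pow2_ge_0 (Rpower eps a)).
        unfold Rpower at 2. nra. }
  replace (4 * (eps / 4) ^ 2) with (/ 4 * eps ^ 2) by field.
  pose proof (pow2_ge_0 eps). lra.
Qed.

Lemma Rpower_scaled_bounds K x a : 0 < K -> 0 < x <= 1 -> 0 <= a ->
  0 < K * Rpower x a <= K.
Proof.
  intros HK Hx Ha.
  assert (Hpow : 0 < Rpower x a <= 1).
  { split; [apply exp_pos|]. rewrite <- (Rpower_O x) by lra.
    apply Rpower_le_of_le_1; auto. }
  split; nra.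
Qed.

Lemma kolm_ok_power_bound G p :
  (exists C, 0 < C /\
     forall eps, 0 < eps <= 1 ->
       exists d, is_kolm_dim G eps d /\ INR d <= C * Rpower eps (- p)) ->
  exists C, 1 <= C /\
     forall eps, 0 < eps <= 1 ->
       exists d, kolm_ok G eps d /\ INR d <= C * Rpower eps (- p).
Proof.
  intros [C [_ HC]]. exists (Rmax C 1). split; [apply Rmax_r|].
  intros eps Heps. destruct (HC eps Heps) as [d [[Hd _] Hbound]].
  exists d. split; auto. apply (Rle_trans _ _ _ Hbound).
  apply Rmult_le_compat_r; [left; apply exp_pos|apply Rmax_l].
Qed.

Theorem mainTheorem14 (G : seqR -> Prop) (p : R) :
  orthosymmetric G -> convex G -> l2compact G ->
  0 < p < 1 ->
  (exists C, 0 < C /\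
     forall eps, 0 < eps <= 1 ->
       exists d, is_kolm_dim G eps d /\ INR d <= C * Rpower eps (- p)) ->
  exists C', 0 < C' /\
     forall eps, 0 < eps <= 1 ->
       exists d, is_coord_kolm_dim G eps d /\
         INR d <= C' * Rpower eps (- (p / (1 - p))).
Proof.
  intros Hos Hcv Hcp Hp Hdim.
  destruct (kolm_ok_power_bound G p Hdim) as [C [HC Hkolm]].
  set (K := / (4 * C)).
  assert (HK : 0 < K <= / 4) by (split; [apply Rinv_0_lt_compat|apply Rinv_le_contravar]; lra).
  exists (5 * C * Rpower (K / 2) (- p)).
  split; [apply Rmult_lt_0_compat; [lra|apply exp_pos]|].
  intros eps Heps.
  set (eta := K * Rpower eps (/ (1 - p))).
  assert (Heta : 0 < eta <= K)
    by (apply Rpower_scaled_bounds; [lra|lra|apply Rlt_le, Rinv_0_lt_compat; lra]).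
  destruct (Hkolm (eps / 4)) as [d1 [Hk1 Hd1]]; [lra|].
  destruct (Hkolm (eta / 2)) as [d2 [Hk2 Hd2]]; [lra|].
  destruct (coord_ok_of_kolm_ok G eps (eps / 4) eta d1 d2) as [n [Hn Hn5]]; auto; try lra.
  { apply tail_budget; auto. }
  destruct (coord_kolm_dim_le G eps n Hn) as [d [Hd Hdn]].
  exists d. split; auto.
  replace (eta / 2) with (K / 2 * Rpower eps (/ (1 - p))) in Hd2 by (unfold eta; field).
  rewrite Rpower_mul_Rpower in Hd2 by lra.
  replace (/ (1 - p) * - p) with (- (p / (1 - p))) in Hd2 by (field; lra).
  apply le_INR in Hdn. apply le_INR in Hn5. rewrite mult_INR in Hn5.
  replace (INR 5) with 5 in Hn5 by (simpl; ring). nra.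
Qed.
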